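(* Let $G$ be a graph and $e=\{u,v\}\notin G$ an edge between vertices of $G$. Let $K=K(G)$ and $K'=K(G\cup\{e\})$ be the clique complexes, and for each $j$ let $i_j:\mathrm{H}_j(K\cap\mathrm{st}_{K'}(e))\to\mathrm{H}_j(K)$ be the map induced by inclusion (reduced homology over a field). Define $F_k^+(e)=\mathrm{rk}(\ker i_{k-1})$ and $F_k^-(e)=\mathrm{rk}(\mathrm{im}\, i_{k-1})$. Then \[ \beta_k(K')=\beta_k(K)+F_k^+(e)-F_{k+1}^-(e)\quad(k>0),\qquad \beta_0(K')=\beta_0(K)-F_1^-(e), \] and \[ F_k^+(e)+F_k^-(e)=\beta_{k-2}(\mathrm{lk}_{K'}(e))\quad(k>1),\qquad F_1^+(e)+F_1^-(e)=\mathbf{1}\{\mathrm{lk}_{K'}(e)=\emptyset\}. \]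
   Context: The clique complex $K(G)$ of a graph $G$ is the maximal simplicial complex whose 1-skeleton is $G$. For a simplex $\sigma$ of a complex $K$, the closed star $\mathrm{st}_K(\sigma)$ is the smallest subcomplex containing all simplices $\tau\supseteq\sigma$, and the link is $\mathrm{lk}_K(\sigma)=\{\tau\in\mathrm{st}_K(\sigma):\sigma\cap\tau=\emptyset\}$. $\beta_k$ denotes the reduced Betti number (rank of reduced homology over the field). *)

From mathcomp Require Import all_boot all_order all_algebra.
Set Implicit Arguments. Unset Strict Implicit. Unset Printing Implicit Defensive.
Import GRing.Theory.
Local Open Scope ring_scope.

Section Complexes.
Variable T : finType.

(** A simplicial complex is represented by its set of faces
    ({set {set T}}), which (for reduced homology) contains the empty face. *)

Definition clique_complex (adj : rel T) : {set {set T}} :=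
  [set s : {set T} | [forall x in s, forall y in s, (x != y) ==> adj x y]].

Definition add_edge (adj : rel T) (u v : T) : rel T :=
  fun x y => [|| adj x y, (x == u) && (y == v) | (x == v) && (y == u)].

Definition star (K : {set {set T}}) (s : {set T}) : {set {set T}} :=
  [set t : {set T} | [exists r in K, (s \subset r) && (t \subset r)]].

Definition link (K : {set {set T}}) (s : {set T}) : {set {set T}} :=
  [set t in star K s | [disjoint s & t]].

End Complexes.

Section Homology.
Variables (F : fieldType) (T : finType).

Definition NS := #|{: {set T}}|.
Definition fc (i : 'I_NS) : {set T} := enum_val i.

(** Orientation sign of the face obtained by deleting v from s
    (vertices ordered by enum_rank). *)
Definition osign (s : {set T}) (v : T) : F :=
  (-1) ^+ #|[set w in s | (enum_rank w < enum_rank v)%N]|.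

(** Global (augmented) boundary matrix on all subsets of T, acting on row
    vectors: chain c |-> c *m bd. *)
Definition bd : 'M[F]_NS :=
  \matrix_(i, j) \sum_(v in fc i) (fc j == fc i :\ v)%:R * osign (fc i) v.

(** The space of chains of K supported on faces of cardinality n
    (i.e. dimension n-1; n = 0 is the empty face, augmentation). *)
Definition chains (K : {set {set T}}) (n : nat) : 'M[F]_NS :=
  \matrix_(i, j) ((i == j) && (fc i \in K) && (#|fc i| == n))%:R.

Definition cyc (K : {set {set T}}) (n : nat) := (chains K n :&: kermx bd)%MS.
Definition bnd (K : {set {set T}}) (n : nat) := (chains K n.+1 *m bd)%MS.

Definition rbetti (K : {set {set T}}) (d : nat) : nat :=
  (\rank (cyc K d.+1) - \rank (bnd K d.+1))%N.

(** For L a subcomplex of K, the map i : H_{k-1}(L) -> H_{k-1}(K) induced by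
    inclusion, H = Z/B.  ker i = (Z(L) :&: B(K)) / B(L),
    im i = (Z(L) + B(K)) / B(K).  Fplus = rk ker i_{k-1}, Fminus = rk im i_{k-1}
    (k >= 1; faces of dimension k-1 have cardinality k). *)
Definition Fplus (L K : {set {set T}}) (k : nat) : nat :=
  (\rank (cyc L k :&: bnd K k)%MS - \rank (bnd L k))%N.
Definition Fminus (L K : {set {set T}}) (k : nat) : nat :=
  (\rank (cyc L k + bnd K k)%MS - \rank (bnd K k))%N.

End Homology.

(* The closed star S of e in K' is a cone with apex u and K' = K :|: S.  In the
   Mayer-Vietoris sequence of (K, S) the cone S is acyclic, which gives the
   formulas for beta_k(K'); and F^+_k + F^-_k is the dimension of the homology
   of K :&: S in degree k - 1, since i_(k-1) has nullity F^+_k and rank F^-_k.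
   Finally K :&: S is the union of the cones {t | v \notin t} (apex u) and
   {t | u \notin t} (apex v), whose intersection is lk_K'(e), so a second
   Mayer-Vietoris argument identifies its homology with that of the link one
   degree lower.  Homology is computed through the ranks of the subspaces of
   cycles and boundaries, and a cone is acyclic because its cone operator H
   satisfies H d + d H = 1. *)

From mathcomp Require Import all_boot all_order all_algebra.
From mathcomp Require Import ring zify.
Set Implicit Arguments. Unset Strict Implicit. Unset Printing Implicit Defensive.
Import GRing.Theory.
Local Open Scope ring_scope.

Section Boundary.
Variables (F : fieldType) (T : finType).
Local Notation NS := (@NS T).
Local Notation fc := (@fc T).
Local Notation osign := (@osign F T).
Local Notation bd := (@bd F T).

Lemma enum_rank_nat_inj (x y : T) : enum_rank x = enum_rank y :> nat -> x = y.
Proof. by move/val_inj/enum_rank_inj. Qed.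

Lemma osign_setD1 (s : {set T}) x y : x \in s ->
  osign (s :\ x) y = osign s y * (-1) ^+ (enum_rank x < enum_rank y)%N.
Proof.
move=> xs; rewrite /osign -exprD -[LHS]signr_odd -[RHS]signr_odd.
congr ((-1) ^+ _); rewrite [in RHS](cardsD1 x) !inE xs /=.
have -> : [set w in s :\ x | (enum_rank w < enum_rank y)%N] =
          [set w in s | (enum_rank w < enum_rank y)%N] :\ x.
  by apply/setP => w; rewrite !inE andbA.
by rewrite !oddD; case: (_ < _)%N; rewrite /= ?addbb ?addbF ?addbT ?negbK.
Qed.

Lemma osign_mul_self (s : {set T}) y : osign s y * osign s y = 1.
Proof. by rewrite /osign -exprD -signr_odd oddD addbb. Qed.

Lemma fc_inj : injective fc.
Proof. exact: enum_val_inj. Qed.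

Lemma big_fc (g : {set T} -> F) : \sum_(k < NS) g (fc k) = \sum_t g t.
Proof. by rewrite -(big_enum_val (A := predT)); apply: eq_bigl. Qed.

Lemma sum_eq_indicator (g : {set T} -> F) a : \sum_t (t == a)%:R * g t = g a.
Proof.
rewrite (bigD1 a) //= eqxx mul1r big1 ?addr0 // => t /negbTE ->.
by rewrite mul0r.
Qed.

Definition bd_coef (s t : {set T}) : F :=
  \sum_(v in s) (t == s :\ v)%:R * osign s v.

Lemma bdE i j : bd i j = bd_coef (fc i) (fc j).
Proof. by rewrite mxE. Qed.

Lemma sum_bd_coef (g : {set T} -> F) s :
  \sum_t bd_coef s t * g t = \sum_(x in s) osign s x * g (s :\ x).
Proof.
under eq_bigr do rewrite big_distrl /=.
rewrite exchange_big /=; apply: eq_bigr => x _.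
rewrite -(sum_eq_indicator (fun t => osign s x * g t)); apply: eq_bigr => t _.
by rewrite mulrA mulrAC.
Qed.

(* The two ways of deleting x and y from s carry opposite signs. *)
Lemma mulmx_bd_bd : bd *m bd = 0.
Proof.
apply/matrixP => i j; rewrite !mxE.
under eq_bigr do rewrite !bdE.
rewrite (big_fc (fun t => bd_coef (fc i) t * bd_coef t (fc j))) sum_bd_coef.
set s := fc i; set r := fc j.
pose g x y := (r == s :\ x :\ y)%:R * osign s x * osign s y.
have gC x y : g x y = g y x by rewrite /g setDDl setUC -setDDl mulrAC.
pose d x y := if [&& x \in s, y \in s & (enum_rank y < enum_rank x)%N]
              then g x y else 0.
transitivity (\sum_x \sum_y (d x y - d y x)); last first.
  under [LHS]eq_bigr do rewrite sumrB.
  by rewrite sumrB [X in _ - X]exchange_big subrr.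
rewrite [LHS]big_mkcond /=; apply: eq_bigr => x _.
have [xs|xs] := boolP (x \in s); last first.
  by rewrite big1 // => y _; rewrite /d (negbTE xs) andbF subrr.
rewrite /bd_coef big_distrr /= big_mkcond /=; apply: eq_bigr => y _.
rewrite !inE; have [->|yx] /= := eqVneq y x.
  by rewrite /d xs /= ltnn subrr.
have [ys|ys] := boolP (y \in s); last by rewrite /d (negbTE ys) !andbF subrr.
rewrite osign_setD1 // /d xs ys /=.
case: ltngtP => [lt|gt|/enum_rank_nat_inj eq]; last by rewrite eq eqxx in yx.
- by rewrite gC /g expr1; ring.
- by rewrite /g expr0; ring.
Qed.

Definition cone_coef (w : T) (s t : {set T}) : F :=
  ((w \notin s) && (t == w |: s))%:R * osign t w.

Definition cone_mx (w : T) : 'M[F]_NS := \matrix_(i, j) cone_coef w (fc i) (fc j).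

Lemma sum_cone_coef w (g : {set T} -> F) s :
  \sum_t cone_coef w s t * g t = (w \notin s)%:R * osign (w |: s) w * g (w |: s).
Proof.
rewrite -(sum_eq_indicator (fun t => (w \notin s)%:R * osign t w * g t)).
apply: eq_bigr => t _; rewrite /cone_coef -mulnb natrM -!mulrA.
by case: eqP => [->|] /=; rewrite ?mul1r ?mul0r ?mulr0.
Qed.

Lemma cone_mx_homotopy w : cone_mx w *m bd + bd *m cone_mx w = 1%:M.
Proof.
apply/matrixP => i j; rewrite !mxE -(inj_eq fc_inj).
under eq_bigr do rewrite bdE mxE.
under [X in _ + X]eq_bigr do rewrite bdE mxE.
rewrite (big_fc (fun t => cone_coef w (fc i) t * bd_coef t (fc j))).
rewrite (big_fc (fun t => bd_coef (fc i) t * cone_coef w t (fc j))).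
rewrite sum_cone_coef sum_bd_coef; set s := fc i; set r := fc j.
have [ws|ws] := boolP (w \in s).
  rewrite /= !mul0r add0r (bigD1 w) //= big1 ?addr0; last first.
    by move=> x /andP[xs xw]; rewrite /cone_coef !inE eq_sym xw ws mul0r mulr0.
  rewrite /cone_coef !inE eqxx /= setD1K //.
  by have [->|] := eqVneq r s; rewrite ?mul1r ?osign_mul_self // mul0r mulr0.
rewrite /= mul1r /bd_coef (bigD1 w) ?setU11 //= setU1K // mulrDr.
rewrite mulrCA osign_mul_self mulr1 eq_sym -addrA addrC -[RHS]add0r.
congr (_ + _); rewrite big_distrr /=.
rewrite (eq_bigl (fun x => x \in s)); last first.
  by move=> x; rewrite !inE; case: eqVneq => [->|] /=; rewrite ?(negbTE ws) ?andbT.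
rewrite -big_split /=; apply: big1 => x xs.
have xw : x != w by apply: contraNneq ws => <-.
have wsx : w \notin s :\ x by rewrite !inE negb_and ws orbT.
have wsxE : (w |: s) :\ x = w |: (s :\ x).
  by apply/setP => y; rewrite !inE; case: eqVneq => [->|] //=; rewrite (negbTE xw).
rewrite /cone_coef wsx wsxE /=.
have [->|_] := eqVneq r (w |: (s :\ x)); last by rewrite !mul0r !mulr0 addr0.
rewrite !mul1r -wsxE (osign_setD1 _ (setU1r w xs)).
rewrite -[in osign s x](setU1K ws) (osign_setD1 _ (setU11 w s)).
case: ltngtP => [lt|gt|/enum_rank_nat_inj eq]; last by rewrite eq eqxx in xw.
- by rewrite expr1 expr0; ring.
- by rewrite expr1 expr0; ring.
Qed.

End Boundary.

Section Subcomplexes.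
Variable T : finType.
Implicit Types (X Y : {set {set T}}) (s t : {set T}).

Definition down_closed X := forall s t, s \in X -> t \subset s -> t \in X.

Definition cone_apex X (w : T) := forall s, s \in X -> w \notin s -> w |: s \in X.

Definition is_cone X := exists w, cone_apex X w.

Lemma down_closedU X Y : down_closed X -> down_closed Y -> down_closed (X :|: Y).
Proof.
move=> dX dY s t; rewrite !inE => /orP[] sX ts.
  by rewrite (dX _ _ sX ts). by rewrite (dY _ _ sX ts) orbT.
Qed.

Lemma down_closedI X Y : down_closed X -> down_closed Y -> down_closed (X :&: Y).
Proof.
by move=> dX dY s t; rewrite !inE => /andP[sX sY] ts; rewrite (dX _ _ sX ts) (dY _ _ sY ts).
Qed.

End Subcomplexes.

Section ChainSpaces.
Variables (F : fieldType) (T : finType).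
Local Notation NS := (@NS T).
Local Notation fc := (@fc T).
Local Notation bd := (@bd F T).
Implicit Types (X Y : {set {set T}}) (s t : {set T}).

(* Its row space is the space of chains supported on the faces indexed by P. *)
Definition diag_pred (P : pred 'I_NS) : 'M[F]_NS := \matrix_(i, j) ((i == j) && P i)%:R.

Lemma chains_diag X n : chains F X n = diag_pred (fun i => (fc i \in X) && (#|fc i| == n)).
Proof. by apply/matrixP => i j; rewrite !mxE andbA. Qed.

Lemma mul_diag_pred_mx m (P : pred 'I_NS) (M : 'M[F]_(NS, m)) i j :
  (diag_pred P *m M) i j = (P i)%:R * M i j.
Proof.
rewrite !mxE (bigD1 i) //= big1 ?addr0; first by rewrite !mxE eqxx.
by move=> k /negbTE ki; rewrite !mxE eq_sym ki mul0r.
Qed.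

Lemma mul_mx_diag_pred m (P : pred 'I_NS) (M : 'M[F]_(m, NS)) i j :
  (M *m diag_pred P) i j = M i j * (P j)%:R.
Proof.
rewrite !mxE (bigD1 j) //= big1 ?addr0; first by rewrite !mxE eqxx.
by move=> k /negbTE kj; rewrite !mxE kj mulr0.
Qed.

Lemma submx_diag_predP m (P : pred 'I_NS) (M : 'M[F]_(m, NS)) :
  reflect (forall i j, ~~ P j -> M i j = 0) (M <= diag_pred P)%MS.
Proof.
apply: (iffP idP) => [/submxP[D ->] i j /negbTE Pj|M0].
  by rewrite mul_mx_diag_pred Pj mulr0.
have -> : M = M *m diag_pred P.
  apply/matrixP => i j; rewrite mul_mx_diag_pred.
  by have [Pj|/M0->] := boolP (P j); rewrite ?mulr1 ?mul0r.
exact: submxMl.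
Qed.

Lemma chainsS X Y n : X \subset Y -> (chains F X n <= chains F Y n)%MS.
Proof.
move=> sXY; rewrite [C in (_ <= C)%MS]chains_diag; apply/submx_diag_predP => i j.
rewrite mxE; have [<-|] //= := eqVneq i j.
by have [/(subsetP sXY)->|] //= := boolP (fc i \in X); move/negbTE->.
Qed.

Lemma chainsI X Y n : (chains F (X :&: Y) n == chains F X n :&: chains F Y n)%MS.
Proof.
rewrite sub_capmx !chainsS ?subsetIl ?subsetIr //=.
have := capmxSl (chains F X n) (chains F Y n).
rewrite [C in (_ <= C)%MS]chains_diag => /submx_diag_predP cX.
have := capmxSr (chains F X n) (chains F Y n).
rewrite [C in (_ <= C)%MS]chains_diag => /submx_diag_predP cY.
rewrite [C in (_ <= C)%MS]chains_diag; apply/submx_diag_predP => i j; rewrite inE.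
have [Xj|Xj] := boolP (fc j \in X); last by move=> _; apply: cX; rewrite (negbTE Xj).
have [Yj|Yj] := boolP (fc j \in Y); last by move=> _; apply: cY; rewrite (negbTE Yj).
by move=> cj; apply: cX; rewrite Xj.
Qed.

Lemma chainsU X Y n : (chains F (X :|: Y) n == chains F X n + chains F Y n)%MS.
Proof.
apply/andP; split; last by rewrite addsmx_sub !chainsS ?subsetUl ?subsetUr.
have -> : chains F (X :|: Y) n = chains F X n +
    diag_pred (fun i => [&& fc i \notin X, fc i \in Y & #|fc i| == n]).
  apply/matrixP => i j; rewrite !mxE inE.
  by case: (i == j); case: (fc i \in X); case: (fc i \in Y); rewrite /= ?addr0 ?add0r.
apply: addmx_sub_adds => //; rewrite chains_diag; apply/submx_diag_predP => i j.
rewrite mxE; have [<-|] //= := eqVneq i j.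
by rewrite negb_and => /orP[]/negbTE->; rewrite ?andbF.
Qed.

Lemma bnd_sub_chains X n : down_closed X -> (bnd F X n <= chains F X n)%MS.
Proof.
move=> dX; rewrite /bnd !chains_diag; apply/submx_diag_predP => i j Pj.
rewrite mul_diag_pred_mx bdE.
have [/andP[Xi /eqP ci]|] := boolP ((fc i \in X) && (#|fc i| == n.+1)); last by rewrite mul0r.
rewrite /bd_coef big1 ?mulr0 // => x xi.
have [fcjE|] := eqP; last by rewrite mul0r.
move: Pj; rewrite fcjE (dX _ _ Xi (subsetDl _ _)) /=.
by move: ci; rewrite (cardsD1 x) xi add1n => -[->]; rewrite eqxx.
Qed.

Lemma bnd_sub_ker X n : (bnd F X n <= kermx bd)%MS.
Proof. by apply/sub_kermxP; rewrite /bnd -mulmxA mulmx_bd_bd mulmx0. Qed.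

Lemma bnd_sub_cyc X n : down_closed X -> (bnd F X n <= cyc F X n)%MS.
Proof. by move=> dX; rewrite sub_capmx bnd_sub_chains // bnd_sub_ker. Qed.

(* A cycle z is the boundary of its cone z *m cone_mx w, by the homotopy formula. *)
Lemma cyc_sub_bnd_cone X n w :
  (forall s, s \in X -> #|s| = n -> w \notin s -> w |: s \in X) ->
  (cyc F X n <= bnd F X n)%MS.
Proof.
move=> coneX; set Z := cyc F X n.
have Zbd : Z *m bd = 0 by apply/sub_kermxP; exact: capmxSr.
have -> : Z = (Z *m cone_mx F w) *m bd.
  by rewrite -[LHS]mulmx1 -(cone_mx_homotopy F w) mulmxDr !mulmxA Zbd mul0mx addr0.
apply/submxMr/(submx_trans (submxMr _ (capmxSl _ _))).
rewrite !chains_diag; apply/submx_diag_predP => i j Pj.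
rewrite mul_diag_pred_mx mxE /cone_coef.
have [/andP[Xi /eqP ci]|] := boolP ((fc i \in X) && (#|fc i| == n)); last by rewrite mul0r.
have [wi|wi] /= := boolP (w \in fc i); first by rewrite !mul0r mulr0.
have [fcjE|] := eqP; last by rewrite mul0r mulr0.
by move: Pj; rewrite fcjE coneX //= cardsU1 wi ci eqxx.
Qed.

End ChainSpaces.

Section RankCounting.
Variables (F : fieldType) (T : finType).
Implicit Types (X Y I : {set {set T}}).
Local Notation rkC X n := (\rank (chains F X n)).
Local Notation rkZ X n := (\rank (cyc F X n)).
Local Notation rkB X n := (\rank (bnd F X n)).

Lemma rank_chains_succ X n : rkC X n.+1 = (rkB X n + rkZ X n.+1)%N.
Proof. by rewrite /bnd /cyc mxrank_mul_ker. Qed.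

Lemma rank_chainsUI X Y n : (rkC (X :|: Y) n + rkC (X :&: Y) n = rkC X n + rkC Y n)%N.
Proof.
by rewrite (eqmx_rank (chainsU F X Y n)) (eqmx_rank (chainsI F X Y n)) mxrank_sum_cap.
Qed.

Lemma rank_bndUI X Y n :
  (rkB (X :|: Y) n + \rank (bnd F X n :&: bnd F Y n) = rkB X n + rkB Y n)%N.
Proof.
rewrite -[RHS]mxrank_sum_cap /bnd; congr (_ + _)%N.
apply/eqmx_rank/eqmxP.
exact: eqmx_trans (eqmxMr _ (eqmxP (chainsU F X Y n.+1))) (addsmxMr _ _ _).
Qed.

Lemma rank_cycUI X Y n :
  (rkZ (X :|: Y) n.+1 + rkC (X :&: Y) n.+1 =
   rkZ X n.+1 + rkZ Y n.+1 + \rank (bnd F X n :&: bnd F Y n))%N.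
Proof.
have := rank_chainsUI X Y n.+1; have := rank_bndUI X Y n.
rewrite !rank_chains_succ; lia.
Qed.

Lemma rank_bnd_le_cyc X n : down_closed X -> (rkB X n <= rkZ X n)%N.
Proof. by move=> dX; apply: mxrankS; apply: bnd_sub_cyc. Qed.

Lemma rank_cyc_cone X n : down_closed X -> is_cone X -> rkZ X n = rkB X n.
Proof.
move=> dX [w coneX]; apply/eqmx_rank/andP; split; last exact: bnd_sub_cyc.
by apply: (@cyc_sub_bnd_cone F _ _ _ w) => s sX _; apply: coneX.
Qed.

Lemma bnd_cap_sub_cyc X Y n : down_closed X -> down_closed Y ->
  (bnd F X n :&: bnd F Y n <= cyc F (X :&: Y) n)%MS.
Proof.
move=> dX dY; rewrite sub_capmx (eqmxP (chainsI F X Y n)) sub_capmx.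
rewrite (submx_trans (capmxSl _ _) (bnd_sub_chains F _ dX)).
rewrite (submx_trans (capmxSr _ _) (bnd_sub_chains F _ dY)).
by rewrite (submx_trans (capmxSr _ _) (bnd_sub_ker F _ _)).
Qed.

Lemma cyc_sub_bnd_coneS X Y n : down_closed Y -> is_cone Y -> X \subset Y ->
  (cyc F X n <= bnd F Y n)%MS.
Proof.
move=> dY [w coneY] sXY; apply: submx_trans (@cyc_sub_bnd_cone F _ _ _ w _).
  by apply: capmxS => //; apply: chainsS.
by move=> s sY _; apply: coneY.
Qed.

Lemma rank_bnd_cap_cone X Y n : down_closed X -> down_closed Y -> is_cone Y ->
  \rank (bnd F X n :&: bnd F Y n) = \rank (cyc F (X :&: Y) n :&: bnd F X n).
Proof.
move=> dX dY cY; apply/eqmx_rank/andP; split.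
  by rewrite sub_capmx capmxSl bnd_cap_sub_cyc.
by rewrite sub_capmx capmxSr (submx_trans (capmxSl _ _)) ?cyc_sub_bnd_coneS ?subsetIr.
Qed.

Lemma rank_bnd_cap_cones X Y n : down_closed X -> down_closed Y ->
  is_cone X -> is_cone Y -> \rank (bnd F X n :&: bnd F Y n) = rkZ (X :&: Y) n.
Proof.
move=> dX dY cX cY; apply/eqmx_rank/andP; split; first exact: bnd_cap_sub_cyc.
by rewrite sub_capmx !cyc_sub_bnd_coneS ?subsetIl ?subsetIr.
Qed.

Lemma Fminus_add_cap I X k :
  (Fminus F I X k + \rank (cyc F I k :&: bnd F X k) = rkZ I k)%N.
Proof.
have := mxrank_sum_cap (cyc F I k) (bnd F X k).
have := mxrankS (addsmxSr (cyc F I k) (bnd F X k)).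
rewrite /Fminus; lia.
Qed.

Lemma Fplus_add_bnd I X k : down_closed I -> I \subset X ->
  (Fplus F I X k + rkB I k = \rank (cyc F I k :&: bnd F X k))%N.
Proof.
move=> dI sIX; have : (rkB I k <= \rank (cyc F I k :&: bnd F X k))%N.
  by apply/mxrankS; rewrite sub_capmx bnd_sub_cyc //= submxMr ?chainsS.
rewrite /Fplus; lia.
Qed.

End RankCounting.

Section Homology.
Variables (F : fieldType) (T : finType).
Implicit Types (X Y I : {set {set T}}).
Local Notation fc := (@fc T).
(* Homology in degree n - 1 (faces of cardinality n); rbetti F X d is hrank X d.+1. *)
Local Notation hrank X n := (\rank (cyc F X n) - \rank (bnd F X n))%N.

Lemma rbetti_union_cone X Y k : down_closed X -> down_closed Y -> is_cone Y ->
  (rbetti F (X :|: Y) k)%:Z =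
  (rbetti F X k)%:Z + (Fplus F (X :&: Y) X k)%:Z - (Fminus F (X :&: Y) X k.+1)%:Z.
Proof.
move=> dX dY cY; have dXY := down_closedU dX dY.
have := rank_cycUI F X Y k; have := rank_bndUI F X Y k.+1.
have := rank_cyc_cone F k.+1 dY cY; have := rank_chains_succ F (X :&: Y) k.
have := rank_bnd_cap_cone F k dX dY cY; have := rank_bnd_cap_cone F k.+1 dX dY cY.
have := Fminus_add_cap F (X :&: Y) X k.+1.
have := Fplus_add_bnd F k (down_closedI dX dY) (subsetIl X Y).
have := rank_bnd_le_cyc F k.+1 dXY; have := rank_bnd_le_cyc F k.+1 dX.
rewrite /rbetti; lia.
Qed.

Lemma Fplus_add_Fminus I X k : down_closed I -> I \subset X ->
  (Fplus F I X k + Fminus F I X k = hrank I k)%N.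
Proof.
move=> dI sIX; have := Fminus_add_cap F I X k; have := Fplus_add_bnd F k dI sIX.
lia.
Qed.

Lemma hrank_union_cones X Y m : down_closed X -> down_closed Y ->
  is_cone X -> is_cone Y -> hrank (X :|: Y) m.+1 = hrank (X :&: Y) m.
Proof.
move=> dX dY cX cY.
have := rank_cycUI F X Y m; have := rank_bndUI F X Y m.+1.
have := rank_cyc_cone F m.+1 dX cX; have := rank_cyc_cone F m.+1 dY cY.
have := rank_chains_succ F (X :&: Y) m.
have := rank_bnd_cap_cones F m dX dY cX cY; have := rank_bnd_cap_cones F m.+1 dX dY cX cY.
have := rank_bnd_le_cyc F m.+1 (down_closedU dX dY).
have := rank_bnd_le_cyc F m (down_closedI dX dY).
lia.
Qed.

Lemma cyc_card0_sub_bnd X w : [set w] \in X -> (cyc F X 0 <= bnd F X 0)%MS.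
Proof.
move=> wX; apply: (@cyc_sub_bnd_cone F _ _ _ w) => s _ /eqP.
by rewrite cards_eq0 => /eqP-> _; rewrite setU0.
Qed.

Lemma Fplus_card0 I X w : [set w] \in I -> Fplus F I X 0 = 0%N.
Proof.
move=> wI; apply/eqP; rewrite subn_eq0; apply/mxrankS.
exact: submx_trans (capmxSl _ _) (cyc_card0_sub_bnd wI).
Qed.

Lemma rank_cyc_card0 X : set0 \in X -> \rank (cyc F X 0) = 1%N.
Proof.
move=> X0; pose i0 : 'I_(NS T) := enum_rank set0.
have fci0 : fc i0 = set0 by rewrite /fc /i0 enum_rankK.
have fcE i : (fc i == set0) = (i == i0) by rewrite -fci0 (inj_eq (@fc_inj T)).
have C0 : chains F X 0 = delta_mx i0 i0.
  apply/matrixP => i j; rewrite !mxE cards_eq0 fcE.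
  have [->|_] := eqVneq i i0; rewrite ?andbF //=.
  by rewrite fci0 X0 !andbT eq_sym.
have C0bd : (chains F X 0 <= kermx (bd F T))%MS.
  apply/sub_kermxP/matrixP => i j; rewrite chains_diag mul_diag_pred_mx bdE mxE.
  have [/andP[_]|] := boolP ((fc i \in X) && (#|fc i| == 0%N)); last by rewrite mul0r.
  by rewrite cards_eq0 => /eqP->; rewrite /bd_coef big_set0 mulr0.
by rewrite /cyc (eqmx_rank (introT eqmxP (capmx_idPl C0bd))) C0 mxrank_delta.
Qed.

Lemma hrank_card0 X : down_closed X -> set0 \in X -> hrank X 0 = (X == [set set0]).
Proof.
move=> dX X0; rewrite rank_cyc_card0 //; have [XE|X1] := eqVneq X [set set0].
  suff C1 : chains F X 1 = 0 by rewrite /bnd C1 mul0mx mxrank0.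
  apply/matrixP => i j; rewrite !mxE XE inE.
  by have [->|] := eqVneq (fc i) set0; rewrite ?cards0 ?andbF.
have [t tX t0] : exists2 t, t \in X & t != set0.
  apply/exists_inP; apply: contraR X1 => /exists_inPn tX0.
  by apply/eqP/setP => t; rewrite inE; apply/idP/eqP => [/tX0/negPn/eqP|->].
have [w wt] := set0Pn t t0.
apply/eqP; rewrite subn_eq0 -(rank_cyc_card0 X0); apply/mxrankS.
by apply: (@cyc_card0_sub_bnd _ w); apply: dX tX _; rewrite sub1set.
Qed.

End Homology.

Section Stars.
Variable T : finType.
Implicit Types (K X : {set {set T}}) (s t : {set T}).

Lemma mem_star K s t r : r \in K -> s \subset r -> t \subset r -> t \in star K s.
Proof. by move=> rK sr tr; rewrite inE; apply/exists_inP; exists r; rewrite ?sr. Qed.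

Lemma star_down_closed K s : down_closed (star K s).
Proof.
move=> t t'; rewrite inE => /exists_inP[r rK /andP[sr tr]] t't.
exact: mem_star rK sr (subset_trans t't tr).
Qed.

Lemma star_sub K s : down_closed K -> star K s \subset K.
Proof.
by move=> dK; apply/subsetP => t; rewrite inE => /exists_inP[r rK /andP[_]]; apply: dK.
Qed.

Lemma star_cone_apex K s w : w \in s -> cone_apex (star K s) w.
Proof.
move=> ws t; rewrite inE => /exists_inP[r rK /andP[sr tr]] _.
by rewrite (mem_star rK sr) // subUset sub1set (subsetP sr w ws).
Qed.

Definition faces_avoiding X (w : T) := [set t in X | w \notin t].

Lemma in_faces_avoiding X w t : (t \in faces_avoiding X w) = (t \in X) && (w \notin t).
Proof. by rewrite inE. Qed.

Lemma faces_avoiding_down_closed X w : down_closed X -> down_closed (faces_avoiding X w).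
Proof.
move=> dX s t; rewrite !in_faces_avoiding => /andP[sX ws] ts; rewrite (dX _ _ sX ts).
by apply: contra ws; apply: (subsetP ts).
Qed.

End Stars.

Section CliqueComplexes.
Variables (T : finType) (adj : rel T) (u v : T).
Implicit Types (s t : {set T}).

Lemma clique_complexP (a : rel T) s :
  reflect (forall x y, x \in s -> y \in s -> x != y -> a x y) (s \in clique_complex a).
Proof.
rewrite inE; apply: (iffP forallP) => [cl x y xs ys xy|cl x].
  by move: (cl x); rewrite xs => /forallP/(_ y); rewrite ys xy.
by apply/implyP => xs; apply/forallP => y; apply/implyP => ys; apply/implyP; apply: cl.
Qed.

Lemma clique_complex_down_closed (a : rel T) : down_closed (clique_complex a).
Proof.
move=> s t /clique_complexP cl ts; apply/clique_complexP => x y xt yt.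
by apply: cl; apply: (subsetP ts).
Qed.

Lemma set1_clique (a : rel T) w : [set w] \in clique_complex a.
Proof. by apply/clique_complexP => x y /set1P-> /set1P->; rewrite eqxx. Qed.

Lemma star_clique_sub (a : rel T) s t :
  t \in star (clique_complex a) s -> t \in clique_complex a.
Proof. exact/subsetP/star_sub/clique_complex_down_closed. Qed.

Local Notation K := (clique_complex adj).
Local Notation K' := (clique_complex (add_edge adj u v)).
Local Notation e := [set u; v].
Local Notation L := (K :&: star K' e).

Lemma clique_add_edge_clique t : t \in K' -> ~~ ((u \in t) && (v \in t)) -> t \in K.
Proof.
move=> /clique_complexP cl uvt; apply/clique_complexP => x y xt yt xy.
case/or3P: (cl x y xt yt xy) => // /andP[/eqP ex /eqP ey];
  by move: uvt; rewrite -ex -ey xt yt.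
Qed.

Lemma edge_clique_add_edge : u != v -> e \in K'.
Proof.
move=> uv; apply/clique_complexP => x y; rewrite /add_edge !inE.
by case/orP=> /eqP-> /orP[]/eqP->; rewrite ?eqxx ?orbT //= eq_sym (negbTE uv).
Qed.

Lemma clique_add_edge_split : K' = K :|: star K' e.
Proof.
apply/setP => t; rewrite in_setU; apply/idP/idP => [tK'|].
  have [/andP[ut vt]|uvt] := boolP ((u \in t) && (v \in t)).
    by rewrite (mem_star tK') ?orbT // subUset !sub1set ut vt.
  by rewrite clique_add_edge_clique.
case/orP => [/clique_complexP cl|/star_clique_sub //].
by apply/clique_complexP => x y xt yt xy; rewrite /add_edge cl.
Qed.

Lemma clique_cap_star_split : u != v -> ~~ adj u v ->
  L = faces_avoiding L v :|: faces_avoiding L u.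
Proof.
move=> uv nadj; apply/setP => t; rewrite in_setU !in_faces_avoiding -andb_orr.
have [/setIP[/clique_complexP cl _]|] //= := boolP (t \in L).
rewrite -negb_and; apply/esym/negP => /andP[vt ut].
by move: (cl u v ut vt uv); rewrite (negbTE nadj).
Qed.

Lemma link_edgeE : link K' e = faces_avoiding L v :&: faces_avoiding L u.
Proof.
apply/setP => t; rewrite in_setI !in_faces_avoiding /link in_set.
rewrite disjoints_subset subUset !sub1set !in_setC.
have [ut|ut] := boolP (u \in t); have [vt|vt] := boolP (v \in t); rewrite ?andbF //.
rewrite !andbT andbb in_setI andb_idl // => tS.
apply: clique_add_edge_clique; last by rewrite (negbTE ut).
exact: star_clique_sub tS.
Qed.

Lemma faces_avoiding_cone_apex w w' : w \in e -> w' \in e -> w != w' ->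
  cone_apex (faces_avoiding L w') w.
Proof.
move=> we w'e ww' t; rewrite !in_faces_avoiding => /andP[/setIP[_ tS] w't] wt.
have wtS : w |: t \in star K' e := star_cone_apex we tS wt.
have w'wt : w' \notin w |: t by rewrite in_setU1 negb_or eq_sym ww'.
rewrite w'wt in_setI wtS !andbT; apply: clique_add_edge_clique.
  exact: star_clique_sub wtS.
by apply/negP => /andP[ut vt]; case/set2P: w'e w'wt => ->; rewrite ?ut ?vt.
Qed.

End CliqueComplexes.

Unset Implicit Arguments.

Theorem lemma6p1 (F : fieldType) (T : finType) (adj : rel T) (u v : T) :
  symmetric adj -> irreflexive adj -> u != v -> ~~ adj u v ->
  let K := clique_complex adj in
  let K' := clique_complex (add_edge adj u v) in
  let e := [set u; v] in
  let L := K :&: star K' e in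
  (forall k : nat, (0 < k)%N ->
     (rbetti F K' k)%:Z
     = (rbetti F K k)%:Z + (Fplus F L K k)%:Z - (Fminus F L K k.+1)%:Z)
  /\ (rbetti F K' 0)%:Z = (rbetti F K 0)%:Z - (Fminus F L K 1)%:Z
  /\ (forall k : nat, (1 < k)%N ->
        (Fplus F L K k + Fminus F L K k)%N = rbetti F (link K' e) k.-2)
  /\ (Fplus F L K 1 + Fminus F L K 1)%N = nat_of_bool (link K' e == [set set0]).
Proof.
move=> _ _ uv nadj K K' e L.
have ue : u \in e by rewrite !inE eqxx.
have ve : v \in e by rewrite !inE eqxx orbT.
have dK : down_closed K := @clique_complex_down_closed _ adj.
have dS : down_closed (star K' e) := @star_down_closed _ K' e.
have cS : is_cone (star K' e) by exists u; apply: star_cone_apex.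
have dL : down_closed L := down_closedI dK dS.
have dA : down_closed (faces_avoiding L v) := faces_avoiding_down_closed dL.
have dB : down_closed (faces_avoiding L u) := faces_avoiding_down_closed dL.
have cA : is_cone (faces_avoiding L v) by exists u; exact: faces_avoiding_cone_apex.
have cB : is_cone (faces_avoiding L u).
  by exists v; apply: faces_avoiding_cone_apex; rewrite // eq_sym.
have hL k : (Fplus F L K k + Fminus F L K k)%N = (\rank (cyc F L k) - \rank (bnd F L k))%N.
  exact: Fplus_add_Fminus dL (subsetIl _ _).
have K'_split : K' = K :|: star K' e := clique_add_edge_split adj u v.
have L_split : L = faces_avoiding L v :|: faces_avoiding L u := clique_cap_star_split uv nadj.
have lk_split : link K' e = faces_avoiding L v :&: faces_avoiding L u := link_edgeE adj u v.
split; [|split; [|split]].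
- by move=> k _; rewrite {1}K'_split; apply: rbetti_union_cone.
- rewrite {1}K'_split rbetti_union_cone // (Fplus_card0 F K (w := u)) ?addr0 //.
  by rewrite in_setI set1_clique (mem_star (edge_clique_add_edge adj uv)) ?sub1set.
- case=> [|[|m]] // _; rewrite hL L_split lk_split.
  exact: hrank_union_cones.
- rewrite hL L_split hrank_union_cones // -lk_split; apply: hrank_card0.
    by rewrite lk_split; apply: down_closedI.
  rewrite /link in_set (mem_star (edge_clique_add_edge adj uv)) ?sub0set //.
  by rewrite disjoints_subset setC0 subsetT.
Qed.
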